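(* Let $n\geqslant1$, $N\in\mathbb{N}$, $\gamma\in\mathbb{R}\setminus\{0\}$, let $a_0,\ldots,a_n$ be functions holomorphic near $t=0$ with $a_n\equiv1$, and let $M(x,t,u_0,\ldots,u_n)$ be meromorphic in $t$ and holomorphic in the remaining variables near $0\in\mathbb{C}^{n+3}$. Assume that for every integer $k\geqslant1$ the polynomial $$P_k(\lambda)=\sum_{j=0}^n a_j(0)\,(k+N+{\rm i}\gamma\lambda)^j$$ has no integer roots. Suppose the equation $$\sum_{j=0}^n a_j(x^{{\rm i}\gamma})(\delta+N)^j u=x\,M(x,x^{{\rm i}\gamma},u,\delta u,\ldots,\delta^n u),\qquad\delta=x\frac{d}{dx},$$ has a formal solution $\psi=\sum_{k=1}^\infty c_k(x^{{\rm i}\gamma})x^k$ with each $c_k$ meromorphic at $t=0$. Then $\psi$ is the unique exotic formal series of the form $\sum_{k=1}^\infty c_k(x^{{\rm i}\gamma})x^k$ (with $c_k$ meromorphic at $t=0$) satisfying this equation.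
   Context: $x^{{\rm i}\gamma}=e^{{\rm i}\gamma\ln x}$. On exotic series $\delta$ acts termwise by $\delta\bigl(p(x^{{\rm i}\gamma})x^k\bigr)=\bigl((k+{\rm i}\gamma\,t\tfrac{d}{dt})p\bigr)(x^{{\rm i}\gamma})x^k$, and substitution into $M$ is formal, collecting terms by powers of $x$. *)

From HB Require Import structures.
From mathcomp Require Import all_boot all_order all_algebra.
From mathcomp Require Import complex Rstruct.
Set Implicit Arguments. Unset Strict Implicit. Unset Printing Implicit Defensive.
Import Order.TTheory GRing.Theory Num.Theory.
Local Open Scope ring_scope.

Definition CC := (Rdefinitions.R)[i].

(* A germ at t = 0 given by a power series sum_n a n t^n is holomorphic
   iff the series has a positive radius of convergence, i.e. iff
   |a n| r^n is bounded for some r > 0. *)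
Definition conv_series (a : nat -> CC) : Prop :=
  exists r : CC, exists B : CC, 0 < r /\ forall n, `|a n| * r ^+ n <= B.

(* Formal Laurent series with finite principal part:
   Laurent v a  stands for  t^(-v) * sum_(n >= 0) a n t^n. *)
Record laurent := Laurent { lval : nat; lcf : nat -> CC }.

Definition lcoef (f : laurent) (m : int) : CC :=
  if (0 <= m + (lval f)%:Z)%R then lcf f (absz (m + (lval f)%:Z)) else 0.

Definition leqL (f g : laurent) : Prop := forall m : int, lcoef f m = lcoef g m.

Definition mero (f : laurent) : Prop := conv_series (lcf f).

Definition lzero : laurent := Laurent 0 (fun _ => 0).
Definition lone : laurent := Laurent 0 (fun n => (n == 0%N)%:R).

(* the same series, represented with pole order  lval f + k *)
Definition lraise (k : nat) (f : laurent) : laurent :=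
  Laurent (lval f + k) (fun n => if (n < k)%N then 0 else lcf f (n - k)).

Definition ladd (f g : laurent) : laurent :=
  let w := maxn (lval f) (lval g) in
  let f' := lraise (w - lval f) f in
  let g' := lraise (w - lval g) g in
  Laurent w (fun n => lcf f' n + lcf g' n).

Definition lmul (f g : laurent) : laurent :=
  Laurent (lval f + lval g)
          (fun n => \sum_(i < n.+1) lcf f i * lcf g (n - i)).

Definition lhol (a : nat -> CC) : laurent := Laurent 0 a.

(* the operator (z + i gamma t d/dt)^j on Laurent series:
   it multiplies the coefficient of t^(n - v) by (z + i gamma (n - v))^j *)
Definition lop (gamma : Rdefinitions.R) (z : CC) (j : nat) (f : laurent) : laurent :=
  Laurent (lval f)
    (fun n => (z + 'i * gamma%:C * ((n%:Z - (lval f)%:Z)%:~R))%C ^+ j * lcf f n).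

(* Formal series in x with Laurent coefficients: F k = coefficient of x^k. *)
Definition xser := nat -> laurent.

Definition xmul (F G : xser) : xser :=
  fun k => \big[ladd/lzero]_(i < k.+1) lmul (F i) (G (k - i)%N).

Definition xone : xser := fun k => if k == 0%N then lone else lzero.

Definition xpow (F : xser) (e : nat) : xser := iter e (xmul F) xone.

Section Equation.
Variables (n N : nat) (gamma : Rdefinitions.R).
(* a j = Taylor coefficients of a_j at t = 0 *)
Variable a : 'I_n.+1 -> nat -> CC.
(* M(x,t,u_0..u_n) = t^(-mM) * sum_(p,s,q) Mc p s q x^p t^s u^q *)
Variable mM : nat.
Variable Mc : nat -> nat -> {ffun 'I_n.+1 -> nat} -> CC.

(* exotic series psi = sum_(k >= 1) c_k(x^{i gamma}) x^k, encoded by the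
   sequence c (c 0 is ignored). delta^j psi has x^l-coefficient
   (l + i gamma t d/dt)^j c_l. *)
Definition delta_pow (c : nat -> laurent) (j : nat) : xser :=
  fun l => if l == 0%N then lzero else lop gamma l%:R j (c l).

(* coefficient of x^k in sum_j a_j(x^{i gamma}) (delta + N)^j psi *)
Definition lhs_coef (c : nat -> laurent) (k : nat) : laurent :=
  \big[ladd/lzero]_(j < n.+1) lmul (lhol (a j)) (lop gamma (k + N)%:R j (c k)).

(* coefficient of x^e in M(x, x^{i gamma}, psi, delta psi, .., delta^n psi)
   (formal substitution; monomials with q_j > e contribute nothing) *)
Definition M_subst_coef (c : nat -> laurent) (e : nat) : laurent :=
  \big[ladd/lzero]_(p < e.+1)
   \big[ladd/lzero]_(q : {ffun 'I_n.+1 -> 'I_e.+1})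
     lmul (Laurent mM (fun s => Mc p s [ffun j => nat_of_ord (q j)]))
          ((\big[xmul/xone]_(j < n.+1) xpow (delta_pow c j) (q j)) (e - p)%N).

(* coefficient of x^k (k >= 1) in x * M(...) *)
Definition rhs_coef (c : nat -> laurent) (k : nat) : laurent :=
  M_subst_coef c k.-1.

Definition exotic_solution (c : nat -> laurent) : Prop :=
  (forall k, (0 < k)%N -> mero (c k)) /\
  (forall k, (0 < k)%N -> leqL (lhs_coef c k) (rhs_coef c k)).

Definition Pk (k : nat) : {poly CC} :=
  \sum_(j < n.+1) (a j 0%N)%:P * (((k + N)%:R : CC)%:P + ('i * gamma%:C)%C *: 'X) ^+ j.

End Equation.

From HB Require Import structures.
From mathcomp Require Import all_boot all_order all_algebra.
From mathcomp Require Import complex Rstruct zify.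
Set Implicit Arguments. Unset Strict Implicit. Unset Printing Implicit Defensive.
Import Order.TTheory GRing.Theory Num.Theory.
Local Open Scope ring_scope.

(* Compare coefficients of x^k.  Since psi has no x^0 term, the x^k-coefficient
   of x M(x, x^{i gamma}, psi, ..., delta^n psi) only involves c_1, ..., c_(k-1),
   while that of the left-hand side is L_k c_k, where
   L_k = sum_j a_j(t) (k + N + i gamma t d/dt)^j acts on Laurent series in t.
   L_k is lower triangular with respect to the powers of t, with diagonal entry
   P_k(m) on t^m; when P_k has no integer roots it is therefore injective, and
   c_k is determined by c_1, ..., c_(k-1). *)

Lemma leqL_sym f g : leqL f g -> leqL g f.
Proof. by move=> E m; rewrite E. Qed.

Lemma leqL_trans f g h : leqL f g -> leqL g h -> leqL f h.
Proof. by move=> E1 E2 m; rewrite E1 E2. Qed.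

Lemma lcoef_lval f m : lcoef f (m%:Z - (lval f)%:Z) = lcf f m.
Proof. by rewrite /lcoef subrK. Qed.

Lemma leqL_lcf f g : lval f = lval g -> lcf f =1 lcf g -> leqL f g.
Proof. by move=> ev ec m; rewrite /lcoef ev ec. Qed.

Lemma lcf_leqL f g : leqL f g -> lval f = lval g -> lcf f =1 lcf g.
Proof. by move=> E ev m; rewrite -lcoef_lval E ev lcoef_lval. Qed.

Lemma lcoef_lraise k f m : lcoef (lraise k f) m = lcoef f m.
Proof.
rewrite /lcoef /= PoszD addrA.
case: (m + (lval f)%:Z) => [p|p].
  by rewrite -PoszD /= ltnNge leq_addl /= addnK.
by case: ifP => // le0; have -> : (absz (Negz p + k%:Z)%R < k)%N by lia.
Qed.

Lemma leqL_lraise k f : leqL (lraise k f) f.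
Proof. by move=> m; rewrite lcoef_lraise. Qed.

Lemma lval_lraise_swap f f' : lval (lraise (lval f') f) = lval (lraise (lval f) f').
Proof. by rewrite /= addnC. Qed.

Lemma lcoef_lzero m : lcoef lzero m = 0.
Proof. by rewrite /lcoef; case: ifP. Qed.

Lemma lcoef_ladd f g m : lcoef (ladd f g) m = lcoef f m + lcoef g m.
Proof.
set w := maxn (lval f) (lval g).
rewrite -(leqL_lraise (w - lval f) f m) -(leqL_lraise (w - lval g) g m).
rewrite /ladd /lcoef -/w /= !subnKC ?leq_maxl ?leq_maxr //.
by case: ifP; rewrite ?addr0.
Qed.

Lemma ladd_compat f f' g g' : leqL f f' -> leqL g g' -> leqL (ladd f g) (ladd f' g').
Proof. by move=> E1 E2 m; rewrite !lcoef_ladd E1 E2. Qed.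

Lemma big_ladd_compat (I : Type) (r : seq I) (P : pred I) (F G : I -> laurent) :
  (forall i, P i -> leqL (F i) (G i)) ->
  leqL (\big[ladd/lzero]_(i <- r | P i) F i) (\big[ladd/lzero]_(i <- r | P i) G i).
Proof. by move=> E; apply: (big_ind2 leqL) => // *; apply: ladd_compat. Qed.

Lemma lmulC f g : leqL (lmul f g) (lmul g f).
Proof.
apply: leqL_lcf => [|m] /=; first by rewrite addnC.
rewrite (reindex_inj rev_ord_inj) /=; apply: eq_bigr => i _.
by rewrite mulrC subSS subKn // -ltnS.
Qed.

Lemma lmul_lraisel k f g : leqL (lmul (lraise k f) g) (lmul f g).
Proof.
apply: leqL_trans (leqL_lraise k (lmul f g)).
apply: leqL_lcf => [|m] /=; first by rewrite addnAC.
case: ltnP => [lt_mk | le_km].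
  by apply: big1 => i _; rewrite ifT ?mul0r // (leq_ltn_trans _ lt_mk) // -ltnS.
rewrite -(subnKC le_km) -addnS big_split_ord /= big1 ?add0r; last first.
  by move=> i _; rewrite /= ltn_ord mul0r.
rewrite addKn; apply: eq_bigr => i _ /=.
by rewrite ltnNge leq_addr /= !addKn subnDl.
Qed.

Lemma lmul_lcf f f' g : lval f = lval f' -> lcf f =1 lcf f' -> leqL (lmul f g) (lmul f' g).
Proof.
by move=> ev ec; apply: leqL_lcf => [|m] /=; [rewrite ev | apply: eq_bigr => i _; rewrite ec].
Qed.

Lemma lmul_compatl f f' g : leqL f f' -> leqL (lmul f g) (lmul f' g).
Proof.
move=> E; apply: leqL_trans (leqL_sym (lmul_lraisel (lval f') f g)) _.
apply: leqL_trans (lmul_lraisel (lval f) f' g).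
have ev := lval_lraise_swap f f'; apply: (lmul_lcf _ ev); apply: lcf_leqL ev.
exact: leqL_trans (leqL_lraise _ _) (leqL_trans E (leqL_sym (leqL_lraise _ _))).
Qed.

Lemma lmul_compat f f' g g' : leqL f f' -> leqL g g' -> leqL (lmul f g) (lmul f' g').
Proof.
move=> E1 E2; apply: leqL_trans (lmul_compatl g E1) _.
apply: leqL_trans (lmulC f' g) _; apply: leqL_trans (lmulC g' f').
exact: lmul_compatl.
Qed.

Lemma lcoef_lop gamma z j f m :
  lcoef (lop gamma z j f) m = (z + 'i * gamma%:C * m%:~R)%C ^+ j * lcoef f m.
Proof. by rewrite /lcoef /=; case: ifP => [le0|_]; rewrite ?mulr0 // gez0_abs // addrK. Qed.

Lemma lop_compat gamma z j f f' : leqL f f' -> leqL (lop gamma z j f) (lop gamma z j f').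
Proof. by move=> E m; rewrite !lcoef_lop E. Qed.

Definition xagree (e : nat) (F G : xser) := forall i, (i <= e)%N -> leqL (F i) (G i).

Lemma xmul_agree e F F' G G' :
  xagree e F G -> xagree e F' G' -> xagree e (xmul F F') (xmul G G').
Proof.
move=> EF EF' i le_ie; apply: big_ladd_compat => j _; apply: lmul_compat.
  by apply: EF; apply: leq_trans le_ie; rewrite -ltnS.
by apply: EF'; apply: leq_trans le_ie; apply: leq_subr.
Qed.

Lemma xpow_agree e F G k : xagree e F G -> xagree e (xpow F k) (xpow G k).
Proof. by move=> E; elim: k => [|k IH] //=; apply: xmul_agree. Qed.

Lemma delta_pow_agree gamma e c c' :
  (forall l, (0 < l <= e)%N -> leqL (c l) (c' l)) ->
  forall j, xagree e (delta_pow gamma c j) (delta_pow gamma c' j).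
Proof.
move=> E j l le_le; rewrite /delta_pow; case: eqP => // /eqP l_neq0.
by apply: lop_compat; apply: E; rewrite lt0n l_neq0.
Qed.

Lemma M_subst_coef_compat n gamma mM Mc c c' e :
  (forall j, xagree e (delta_pow gamma c j) (delta_pow gamma c' j)) ->
  leqL (@M_subst_coef n gamma mM Mc c e) (M_subst_coef gamma mM Mc c' e).
Proof.
move=> E; apply: big_ladd_compat => p _; apply: big_ladd_compat => q _.
apply: lmul_compat => //; apply: (big_ind2 (xagree e)) => //.
- by move=> *; apply: xmul_agree.
- by move=> j _; apply: xpow_agree.
- exact: leq_subr.
Qed.

Lemma rhs_coef_compat n gamma mM Mc c c' k :
  (forall l, (0 < l < k)%N -> leqL (c l) (c' l)) ->
  leqL (@rhs_coef n gamma mM Mc c k) (rhs_coef gamma mM Mc c' k).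
Proof.
move=> E; apply/M_subst_coef_compat/delta_pow_agree => l /andP[l_gt0 le_lk].
by apply: E; rewrite l_gt0 /=; lia.
Qed.

Lemma triangular_conv_inj (R : idomainType) (b : nat -> nat -> R) (u v : nat -> R) :
  (forall m, b 0%N m != 0) ->
  (forall m, \sum_(i < m.+1) b i m * u (m - i)%N = \sum_(i < m.+1) b i m * v (m - i)%N) ->
  u =1 v.
Proof.
move=> b0_neq0 E; elim/ltn_ind => m IH.
move: (E m); rewrite !big_ord_recl !subn0.
rewrite [X in _ + X = _](eq_bigr (fun i : 'I_m => b (lift ord0 i) m * v (m - lift ord0 i)%N)).
  by move/addIr/(mulfI (b0_neq0 m)).
by move=> i _; rewrite IH // lift0; have := ltn_ord i; lia.
Qed.

Section EulerOperator.
Variables (n : nat) (gamma : Rdefinitions.R) (a : 'I_n.+1 -> nat -> CC).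

Definition leuler (z : CC) (f : laurent) : laurent :=
  \big[ladd/lzero]_(j < n.+1) lmul (lhol (a j)) (lop gamma z j f).

Definition indicial_poly (z : CC) : {poly CC} :=
  \sum_(j < n.+1) (a j 0%N)%:P * (z%:P + ('i * gamma%:C)%C *: 'X) ^+ j.

Lemma horner_indicial_poly z x :
  (indicial_poly z).[x] = \sum_(j < n.+1) a j 0%N * (z + 'i * gamma%:C * x)%C ^+ j.
Proof.
rewrite horner_sum; apply: eq_bigr => j _.
by rewrite hornerM hornerC horner_exp hornerD hornerC hornerZ hornerX.
Qed.

Lemma leuler_compat z f f' : leqL f f' -> leqL (leuler z f) (leuler z f').
Proof. by move=> E; apply: big_ladd_compat => j _; apply/lmul_compat/lop_compat. Qed.

Definition leuler_entry (z : CC) (w i m : nat) : CC :=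
  \sum_(j < n.+1) a j i * (z + 'i * gamma%:C * ((m - i)%N%:Z - w%:Z)%:~R)%C ^+ j.

Lemma leuler_entry_diag z w m :
  leuler_entry z w 0 m = (indicial_poly z).[(m%:Z - w%:Z)%:~R].
Proof. by rewrite horner_indicial_poly /leuler_entry subn0. Qed.

Lemma lcoef_leuler z f w m : lval f = w ->
  lcoef (leuler z f) (m%:Z - w%:Z) =
  \sum_(i < m.+1) leuler_entry z w i m * lcf f (m - i)%N.
Proof.
move=> <-; rewrite (big_morph (lcoef^~ _) (fun g h => lcoef_ladd g h _) (lcoef_lzero _)).
under eq_bigr => j _ do rewrite (lcoef_lval (lmul _ _) m) /=.
rewrite exchange_big; apply: eq_bigr => i _ /=; rewrite mulr_suml.
by apply: eq_bigr => j _; rewrite mulrA.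
Qed.

Variable z : CC.
Hypothesis indicial_no_int_root : forall m : int, ~~ root (indicial_poly z) m%:~R.

Lemma leuler_inj_lval f f' :
  lval f = lval f' -> leqL (leuler z f) (leuler z f') -> lcf f =1 lcf f'.
Proof.
move=> ev E; apply: (triangular_conv_inj (b := leuler_entry z (lval f))) => m.
  by rewrite leuler_entry_diag; apply: indicial_no_int_root.
by rewrite -!lcoef_leuler.
Qed.

Lemma leuler_inj f f' : leqL (leuler z f) (leuler z f') -> leqL f f'.
Proof.
move=> E; have ev := lval_lraise_swap f f'.
apply: leqL_trans (leqL_sym (leqL_lraise (lval f') f)) _.
apply: leqL_trans (leqL_lraise (lval f) f').
apply: (leqL_lcf ev); apply: (leuler_inj_lval ev).
apply: leqL_trans (leuler_compat z (leqL_lraise _ _)) _.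
exact: leqL_trans E (leuler_compat z (leqL_sym (leqL_lraise _ _))).
Qed.

End EulerOperator.

Theorem lemma2 (n N : nat) (gamma : Rdefinitions.R)
  (a : 'I_n.+1 -> nat -> CC) (mM : nat)
  (Mc : nat -> nat -> {ffun 'I_n.+1 -> nat} -> CC)
  (c c' : nat -> laurent) :
  (1 <= n)%N ->
  gamma != 0 ->
  (* each a_j is holomorphic near t = 0, and a_n = 1 *)
  (forall j, conv_series (a j)) ->
  (forall s, a ord_max s = (s == 0%N)%:R) ->
  (* M = t^(-mM) * (holomorphic function of (x,t,u_0..u_n) near 0) *)
  (exists r : CC, exists B : CC, 0 < r /\
     forall p s (q : {ffun 'I_n.+1 -> nat}),
       `|Mc p s q| * r ^+ (p + s + \sum_(j < n.+1) q j) <= B) ->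
  (* for every k >= 1, P_k has no integer roots *)
  (forall k, (1 <= k)%N -> forall m : int, ~~ root (Pk N gamma a k) m%:~R) ->
  (* psi (encoded by c) is an exotic formal solution *)
  exotic_solution N gamma a mM Mc c ->
  (* uniqueness: any exotic formal solution psi' (encoded by c') equals psi *)
  exotic_solution N gamma a mM Mc c' ->
  forall k, (1 <= k)%N -> leqL (c' k) (c k).
Proof.
move=> _ _ _ _ _ Pk_no_int_root [_ c_sol] [_ c'_sol].
elim/ltn_ind=> k IH k_gt0; apply: (leuler_inj (Pk_no_int_root k k_gt0)).
have rhs_eq : leqL (rhs_coef gamma mM Mc c' k) (rhs_coef gamma mM Mc c k).
  by apply: rhs_coef_compat => l /andP[l_gt0 lt_lk]; apply: IH.
exact: leqL_trans (c'_sol k k_gt0) (leqL_trans rhs_eq (leqL_sym (c_sol k k_gt0))).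
Qed.
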